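(* Let $r\ge 2$ and $n\ge 2r$, and let $\mathrm{Fork}_{n,r}(x)=n+1$ if $x=0^r1^{n-r}$ (the valley), $n+2$ if $x=1^{n-r}0^r$ (the optimum), and $|x|_1$ otherwise. For any run of the (1+1) EA (mutation probability $1/n$, uniform random initialization) on $\mathrm{Fork}_{n,r}$, let $V$ be the event that the valley occurs as the current best solution before the optimum does. Then $\Pr(V)=\tfrac12$.
   Context: The (1+1) EA with mutation probability $1/n$: start with $x$ uniform in $\{0,1\}^n$; each iteration create $y$ by flipping each bit of $x$ independently with probability $1/n$, and set $x\gets y$ if $f(y)\ge f(x)$. *)

From HB Require Import structures.
From mathcomp Require Import all_boot all_order all_algebra.
From mathcomp Require Import all_classical all_reals all_analysis.
Set Implicit Arguments. Unset Strict Implicit. Unset Printing Implicit Defensive.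
Import Order.TTheory GRing.Theory Num.Theory.
Local Open Scope ring_scope.

(* Bit strings x = x_1 ... x_n, position k+1 is [x k] for [k : 'I_n]. *)
Definition bits (n : nat) := {ffun 'I_n -> bool}.

Definition onemax (n : nat) (x : bits n) : nat := \sum_(i < n) (x i : nat).

Definition valley (n r : nat) : bits n := [ffun i : 'I_n => (r <= i)%N].
Definition optimum (n r : nat) : bits n := [ffun i : 'I_n => (i < n - r)%N].

Definition fork (n r : nat) (x : bits n) : nat :=
  if x == valley n r then n.+1
  else if x == optimum n r then n.+2
  else onemax x.

Definition mut_prob (R : realType) (n : nat) (x y : bits n) : R :=
  \prod_(i < n) (if x i == y i then 1 - n%:R^-1 else n%:R^-1).

Definition select (n r : nat) (x y : bits n) : bits n :=
  if (fork r x <= fork r y)%N then y else x.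

(* [valley_first_within t x]: probability that the (1+1) EA on Fork_{n,r},
   with current solution x at time 0, has the valley as current solution
   at some time <= t, strictly before the optimum ever was the current
   solution. *)
Fixpoint valley_first_within (R : realType) (n r : nat) (t : nat) (x : bits n)
  : R :=
  match t with
  | 0 => if x == valley n r then 1 else 0
  | t'.+1 =>
      if x == valley n r then 1
      else if x == optimum n r then 0
      else \sum_(y : bits n) mut_prob R x y *
                             valley_first_within R r t' (select r x y)
  end.

Definition prob_valley_first_within (R : realType) (n r t : nat) : R :=
  \sum_(x : bits n) (2 ^+ n)^-1 * valley_first_within R r t x.

From HB Require Import structures.
From mathcomp Require Import all_boot all_order all_algebra.
From mathcomp Require Import all_classical all_reals all_analysis.
From mathcomp Require Import zify ring lra.
Set Implicit Arguments.
Unset Strict Implicit. Unset Printing Implicit Defensive.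
Import numFieldNormedType.Exports.
Import Order.TTheory GRing.Theory Num.Theory.
Local Open Scope classical_set_scope.
Local Open Scope ring_scope.

(* Reversing bit strings swaps the valley 0^r 1^(n-r) and the optimum
   1^(n-r) 0^r, preserves |x|_1 and the mutation probabilities, and hence is
   a symmetry of the (1+1) EA as long as neither target has been reached; from
   the uniform (reversal-invariant) start, the valley and the optimum are
   therefore equally likely to come first.  Moreover the valley is accepted
   from every point other than the optimum and is created by a single
   mutation with probability at least n^-n, so the probability that neither
   has been reached within t steps is at most (1 - n^-n)^t. *)

Section HitBefore.

Variables (R : realType) (T : finType) (K : T -> T -> R) (next : T -> T -> T).

Fixpoint hit_before (u w : T) (t : nat) (x : T) : R :=
  match t with
  | 0 => if x == u then 1 else 0
  | t'.+1 =>
      if x == u then 1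
      else if x == w then 0
      else \sum_y K x y * hit_before u w t' (next x y)
  end.

Fixpoint undecided (u w : T) (t : nat) (x : T) : R :=
  if (x == u) || (x == w) then 0
  else if t is t'.+1 then \sum_y K x y * undecided u w t' (next x y) else 1.

Lemma undecided_target (u w : T) t : undecided u w t u = 0.
Proof. by case: t => [|t] /=; rewrite eqxx. Qed.

Lemma hit_before_sym (s : T -> T) (u w : T) t x :
  injective s -> s w = u -> s u = w ->
  (forall x y, K (s x) (s y) = K x y) ->
  (forall x y, x != u -> x != w -> next (s x) (s y) = s (next x y)) ->
  hit_before u w t (s x) = hit_before w u t x.
Proof.
move=> s_inj swu suw sK snext.
have su x' : (s x' == u) = (x' == w) by rewrite -swu (inj_eq s_inj).
have sw x' : (s x' == w) = (x' == u) by rewrite -suw (inj_eq s_inj).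
elim: t x => [|t IHt] x /=; first by rewrite su.
rewrite su sw; case: (eqVneq x w) => // xw; case: (eqVneq x u) => // xu.
rewrite (reindex_inj s_inj); apply: eq_bigr => y _.
by rewrite sK snext // IHt.
Qed.

Hypothesis K_ge0 : forall x y, 0 <= K x y.
Hypothesis K_sum1 : forall x, \sum_y K x y = 1.

Lemma K_le1 x y : K x y <= 1.
Proof.
rewrite -(K_sum1 x) (bigD1 y) //= lerDl.
by apply: sumr_ge0 => z _; exact: K_ge0.
Qed.

Lemma hit_before_undecided_sum (u w : T) t x : u != w ->
  hit_before u w t x + hit_before w u t x + undecided u w t x = 1.
Proof.
move=> uw; elim: t x => [|t IHt] x /=.
  case: (eqVneq x u) => [->|_]; first by rewrite (negbTE uw) /=; ring.
  by case: (eqVneq x w) => _ /=; ring.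
case: (eqVneq x u) => [->|_]; first by rewrite (negbTE uw) /=; ring.
case: (eqVneq x w) => _ /=; first ring.
rewrite -!big_split /= -(K_sum1 x); apply: eq_bigr => y _.
by rewrite -!mulrDr IHt mulr1.
Qed.

Variables (u w : T) (p : R).
Hypothesis next_to_u : forall x, x != u -> x != w -> next x u = u.
Hypothesis K_to_u_ge : forall x, p <= K x u.

Lemma undecided_bound t x : 0 <= undecided u w t x <= (1 - p) ^+ t.
Proof.
have decay_ge0 k : 0 <= (1 - p) ^+ k.
  by apply: exprn_ge0; rewrite subr_ge0 (le_trans (K_to_u_ge u)) ?K_le1.
elim: t x => [|t IHt] x /=.
  by case: ifP => _; rewrite ?lexx ?ler01.
case: (eqVneq x u) => [_|xu]; first by rewrite lexx decay_ge0.
case: (eqVneq x w) => [_|xw] /=; first by rewrite lexx decay_ge0.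
rewrite (bigD1 u) //= next_to_u // undecided_target mulr0 add0r.
apply/andP; split.
  by apply: sumr_ge0 => y _; rewrite mulr_ge0 // (andP (IHt _)).1.
apply: (@le_trans _ _ (\sum_(y | y != u) K x y * (1 - p) ^+ t)).
  by apply: ler_sum => y _; rewrite ler_wpM2l // (andP (IHt _)).2.
have other_mass : \sum_(y | y != u) K x y = 1 - K x u.
  by rewrite -(K_sum1 x) [in RHS](bigD1 u) //=; ring.
rewrite -mulr_suml other_mass exprS ler_wpM2r // lerB // K_to_u_ge.
Qed.

Lemma mean_hit_before_cvg (s : T -> T) :
  u != w -> 0 < p ->
  injective s -> s w = u -> s u = w ->
  (forall x y, K (s x) (s y) = K x y) ->
  (forall x y, x != u -> x != w -> next (s x) (s y) = s (next x y)) ->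
  (\sum_x hit_before u w t x) / #|T|%:R @[t --> \oo] --> (1 / 2 : R).
Proof.
move=> uw p_gt0 s_inj swu suw sK snext.
have cardT_gt0 : (0 : R) < #|T|%:R.
  by rewrite ltr0n; apply/card_gt0P; exists u.
pose mean_undecided t := (\sum_x undecided u w t x) / #|T|%:R.
have mean_hitE t :
    (\sum_x hit_before u w t x) / #|T|%:R = (1 - mean_undecided t) / 2.
  have hit_swap : \sum_x hit_before u w t x = \sum_x hit_before w u t x.
    rewrite (reindex_inj s_inj); apply: eq_bigr => x _.
    exact: hit_before_sym.
  have total : \sum_x (hit_before u w t x + hit_before w u t x
                       + undecided u w t x) = #|T|%:R.
    by rewrite (eq_bigr _ (fun x _ => hit_before_undecided_sum t x uw))
               sumr_const.
  rewrite !big_split /= -hit_swap in total.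
  have -> : \sum_x hit_before u w t x
            = (#|T|%:R - \sum_x undecided u w t x) / 2 by rewrite -total; field.
  by rewrite /mean_undecided; field; exact: lt0r_neq0 cardT_gt0.
have mean_undecided_bound t : 0 <= mean_undecided t <= (1 - p) ^+ t.
  rewrite ler_pdivrMr // ler_pdivlMr // mul0r; apply/andP; split.
    by apply: sumr_ge0 => x _; exact: (andP (undecided_bound _ _)).1.
  rewrite mulr_natr -sumr_const; apply: ler_sum => x _.
  exact: (andP (undecided_bound _ _)).2.
have decay_cvg : (1 - p) ^+ t @[t --> \oo] --> (0 : R).
  apply: cvg_expr; rewrite ger0_norm ?ltrBlDr ?ltrDl //.
  by rewrite subr_ge0 (le_trans (K_to_u_ge u)) ?K_le1.
have mean_undecided_cvg : mean_undecided t @[t --> \oo] --> (0 : R).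
  apply: (squeeze_cvgr _ (cvg_cst 0) decay_cvg).
  exact: nearW.
have lim_num : 1 - mean_undecided t @[t --> \oo] --> (1 - 0 : R).
  by apply: cvgB => //; exact: cvg_cst.
rewrite subr0 in lim_num.
by rewrite (funext mean_hitE); apply: cvgM => //; exact: cvg_cst.
Qed.

End HitBefore.

Definition brev (n : nat) (x : bits n) : bits n := [ffun i => x (rev_ord i)].

Lemma brevK n : involutive (@brev n).
Proof. by move=> x; apply/ffunP => i; rewrite !ffunE rev_ordK. Qed.

Lemma brev_inj n : injective (@brev n).
Proof. exact: inv_inj (@brevK n). Qed.

Lemma onemax_brev n (x : bits n) : onemax (brev x) = onemax x.
Proof.
rewrite /onemax [RHS](reindex_inj rev_ord_inj) /=.
by apply: eq_bigr => i _; rewrite ffunE.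
Qed.

Lemma onemax_le n (x : bits n) : (onemax x <= n)%N.
Proof.
rewrite /onemax -[leqRHS]card_ord -sum1_card.
by apply: leq_sum => i _; exact: leq_b1.
Qed.

Lemma brev_valley n r : brev (valley n r) = optimum n r.
Proof.
apply/ffunP => i; rewrite !ffunE /=.
have := ltn_ord i.
case: (leqP r (n - i.+1)) => ?; case: (ltnP i (n - r)) => ? //; lia.
Qed.

Lemma brev_optimum n r : brev (optimum n r) = valley n r.
Proof. by rewrite -brev_valley brevK. Qed.

Lemma brev_eq_valley n r (x : bits n) :
  (brev x == valley n r) = (x == optimum n r).
Proof. by rewrite -brev_optimum (inj_eq (@brev_inj n)). Qed.

Lemma brev_eq_optimum n r (x : bits n) :
  (brev x == optimum n r) = (x == valley n r).
Proof. by rewrite -brev_valley (inj_eq (@brev_inj n)). Qed.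

Lemma valley_neq_optimum n r : (0 < r < n)%N -> valley n r != optimum n r.
Proof.
case/andP=> r_gt0 r_lt_n; apply/eqP => /ffunP.
move/(_ (Ordinal (leq_ltn_trans (leq0n r) r_lt_n))); rewrite !ffunE /=.
by rewrite leqNgt r_gt0 subn_gt0 r_lt_n.
Qed.

Lemma fork_onemax n r (x : bits n) :
  x != valley n r -> x != optimum n r -> fork r x = onemax x.
Proof. by rewrite /fork => /negbTE -> /negbTE ->. Qed.

Lemma leq_fork_brev n r m (y : bits n) : (m <= n)%N ->
  (m <= fork r (brev y))%N = (m <= fork r y)%N.
Proof.
move=> m_le_n; rewrite /fork brev_eq_valley brev_eq_optimum onemax_brev.
by do !case: ifP => _; lia.
Qed.

Lemma select_valley n r (x : bits n) :
  x != optimum n r -> select r x (valley n r) = valley n r.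
Proof.
move=> x_opt; rewrite /select {2}/fork eqxx.
case: (eqVneq x (valley n r)) => [->|x_val]; first by case: ifP.
by rewrite fork_onemax // (leq_trans (onemax_le x)).
Qed.

Lemma select_brev n r (x y : bits n) :
  x != valley n r -> x != optimum n r ->
  select r (brev x) (brev y) = brev (select r x y).
Proof.
move=> x_val x_opt.
rewrite /select fork_onemax ?brev_eq_valley ?brev_eq_optimum // onemax_brev.
by rewrite (fork_onemax x_val x_opt) leq_fork_brev ?onemax_le //; case: ifP.
Qed.

Lemma mut_prob_brev (R : realType) n (x y : bits n) :
  mut_prob R (brev x) (brev y) = mut_prob R x y.
Proof.
rewrite /mut_prob [RHS](reindex_inj rev_ord_inj) /=.
by apply: eq_bigr => i _; rewrite !ffunE.
Qed.

Lemma sum_mut_prob (R : realType) n (x : bits n) :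
  \sum_y mut_prob R x y = 1.
Proof.
rewrite /mut_prob -(bigA_distr_bigA (fun i b => if x i == b then _ else _)) /=.
by apply: big1 => i _; rewrite big_bool /=; case: (x i) => /=; ring.
Qed.

Lemma mut_rate_le (R : realFieldType) n : (2 <= n)%N ->
  n%:R^-1 <= 1 - n%:R^-1 :> R.
Proof.
move=> n_ge2; have n_ge2R : (2 : R) <= n%:R by rewrite (ler_nat R 2 n).
have n_inv : n%:R^-1 * n%:R = 1 :> R by rewrite mulVf // pnatr_eq0; lia.
have : 0 < n%:R^-1 :> R by rewrite invr_gt0; lra.
nra.
Qed.

Lemma mut_prob_ge (R : realType) n (x y : bits n) : (2 <= n)%N ->
  n%:R^-1 ^+ n <= mut_prob R x y.
Proof.
move=> n_ge2; have q_le := mut_rate_le R n_ge2.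
have q_ge0 : 0 <= n%:R^-1 :> R by rewrite invr_ge0.
rewrite -[n in _ ^+ n]card_ord -prodr_const /mut_prob.
by apply: ler_prod => i _; case: ifP => _; rewrite q_ge0 ?lexx.
Qed.

Lemma mut_prob_ge0 (R : realType) n (x y : bits n) : (2 <= n)%N ->
  0 <= mut_prob R x y.
Proof. by move=> n_ge2; apply: le_trans (mut_prob_ge _ _ _ n_ge2). Qed.

Lemma valley_first_withinE (R : realType) n r t (x : bits n) :
  valley_first_within R r t x =
  hit_before (@mut_prob R n) (select r) (valley n r) (optimum n r) t x.
Proof.
elim: t x => [|t IHt] x //=; do 2!case: ifP => _ //.
by apply: eq_bigr => y _; rewrite IHt.
Qed.

Lemma card_bits n : #|{: bits n}| = (2 ^ n)%N.
Proof. by rewrite card_ffun card_bool card_ord. Qed.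

Theorem lemma1 (R : realType) (n r : nat) :
  (2 <= r)%N -> (2 * r <= n)%N ->
  prob_valley_first_within R n r t @[t --> \oo] --> (1 / 2 : R).
Proof.
move=> r_ge2 n_ge2r.
have n_ge2 : (2 <= n)%N by lia.
have uniform_mean t : prob_valley_first_within R n r t =
    (\sum_x hit_before (@mut_prob R n) (select r) (valley n r) (optimum n r)
                        t x) / #|{: bits n}|%:R.
  rewrite /prob_valley_first_within -mulr_sumr mulrC card_bits natrX.
  by under eq_bigr do rewrite valley_first_withinE.
rewrite (funext uniform_mean).
apply: (@mean_hit_before_cvg R _ _ _ _ _ _ _ (n%:R^-1 ^+ n) _ _ (@brev n)).
- by move=> x y; exact: mut_prob_ge0.
- exact: sum_mut_prob.
- by move=> x _; exact: select_valley.
- by move=> x; exact: mut_prob_ge.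
- by apply: valley_neq_optimum; lia.
- by rewrite exprn_gt0 // invr_gt0 ltr0n; lia.
- exact: brev_inj.
- exact: brev_optimum.
- exact: brev_valley.
- exact: mut_prob_brev.
- exact: select_brev.
Qed.
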